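(* For every positive integer $x$, the $T$-orbit $x,T(x),T^2(x),\dots$ contains an integer congruent to $2\pmod 9$.
   Context: $T(z)=z/2$ for $z$ even and $T(z)=(3z+1)/2$ for $z$ odd. *)

From mathcomp Require Import all_boot.
Set Implicit Arguments. Unset Strict Implicit. Unset Printing Implicit Defensive.

(* Collatz map T on naturals (orbits of positive integers stay positive):
   T z = z/2 if z even, (3z+1)/2 if z odd. *)
Definition T (z : nat) : nat := if odd z then (3 * z + 1)./2 else z./2.

From mathcomp Require Import all_boot.
From mathcomp Require Import zify.

(* Since 2 is invertible modulo 9 (with inverse 5), the residue of T z modulo
   9 is determined by z mod 9 and the parity of z: it is 5 z for z even and
   5 (3 z + 1) for z odd.  Chasing residues along this transition rule:
     1 -> 2 or 5,   4 -> 2,   5 -> 7 or 8,   7 -> 8 or 2,   8 -> 4 or 8,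
   and multiples of 3 go to 5 (odd step) or to their half (even step).
   Two residues need a termination argument:
   - residue 8 can repeat only through odd steps, and an odd step lowers the
     2-adic valuation of z + 1 by one (since 2 (T z + 1) = 3 (z + 1));
   - a positive multiple of 3 can stay a multiple of 3 only through even
     steps, which strictly decrease it. *)

Definition reaches2 (z : nat) : Prop := exists k : nat, iter k T z = 2 %[mod 9].

Lemma reaches2_T (z : nat) : reaches2 (T z) -> reaches2 z.
Proof. by move=> [k Hk]; exists k.+1; rewrite iterSr. Qed.

Lemma reaches2_mod2 (z : nat) : z %% 9 = 2 -> reaches2 z.
Proof. by move=> Hz; exists 0; rewrite /= Hz. Qed.

(* T in terms of the Euclidean division by 2, a form [lia] can reason with. *)
Lemma T_div2 (z : nat) : T z = if odd z then (3 * z + 1) %/ 2 else z %/ 2.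
Proof. by rewrite /T !divn2. Qed.

(* The residue transition rule: halving is multiplication by 5 modulo 9. *)
Lemma T_mod9 (z : nat) :
  T z = (if odd z then 5 * (3 * z + 1) else 5 * z) %[mod 9].
Proof.
rewrite T_div2; case: (boolP (odd z)) => Hodd.
- have Heven : 2 %| 3 * z + 1 by rewrite dvdn2 oddD oddM Hodd.
  lia.
- have Heven : 2 %| z by rewrite dvdn2.
  lia.
Qed.

Lemma logn2_succ_T_odd (z : nat) :
  odd z -> (logn 2 (T z).+1).+1 = logn 2 z.+1.
Proof.
move=> Hodd.
have Heven : 2 %| 3 * z + 1 by rewrite dvdn2 oddD oddM Hodd.
have Hscale : 2 * (T z).+1 = 3 * z.+1 by rewrite T_div2 Hodd; lia.
have := congr1 (logn 2) Hscale.
by rewrite lognM // logn_prime // logn_Gauss.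
Qed.

Lemma reaches2_mod4 (z : nat) : z %% 9 = 4 -> reaches2 z.
Proof.
move=> Hz; apply/reaches2_T/reaches2_mod2.
by have := T_mod9 z; case: (odd z); lia.
Qed.

(* Residue 8: induction on the 2-adic valuation of z + 1. *)
Lemma reaches2_mod8 (z : nat) : z %% 9 = 8 -> reaches2 z.
Proof.
move Hn : (logn 2 z.+1) => n.
elim: n z Hn => [|n IHn] z Hn Hz; apply: reaches2_T.
all: have := T_mod9 z; case: (boolP (odd z)) => Hodd HT.
- by have := logn2_succ_T_odd z Hodd; rewrite Hn.
- by apply: reaches2_mod4; lia.
- apply: IHn; last by lia.
  by apply: succn_inj; rewrite logn2_succ_T_odd.
- by apply: reaches2_mod4; lia.
Qed.

Lemma reaches2_mod7 (z : nat) : z %% 9 = 7 -> reaches2 z.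
Proof.
move=> Hz; apply: reaches2_T; have := T_mod9 z.
by case: (odd z) => HT; [apply: reaches2_mod2 | apply: reaches2_mod8]; lia.
Qed.

Lemma reaches2_mod5 (z : nat) : z %% 9 = 5 -> reaches2 z.
Proof.
move=> Hz; apply: reaches2_T; have := T_mod9 z.
by case: (odd z) => HT; [apply: reaches2_mod8 | apply: reaches2_mod7]; lia.
Qed.

Lemma reaches2_mod1 (z : nat) : z %% 9 = 1 -> reaches2 z.
Proof.
move=> Hz; apply: reaches2_T; have := T_mod9 z.
by case: (odd z) => HT; [apply: reaches2_mod2 | apply: reaches2_mod5]; lia.
Qed.

(* Positive multiples of 3: strong induction, since even steps halve z. *)
Lemma reaches2_mul3 (z : nat) : 0 < z -> 3 %| z -> reaches2 z.
Proof.
elim/ltn_ind: z => z IHz Hpos H3; apply: reaches2_T.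
case: (boolP (odd z)) => Hodd.
- by apply: reaches2_mod5; have := T_mod9 z; rewrite Hodd; lia.
- have Heven : 2 %| z by rewrite dvdn2.
  by rewrite T_div2 (negbTE Hodd); apply: IHz; lia.
Qed.

Theorem mainTheorem12 (x : nat) (hx : 0 < x) :
  exists k : nat, iter k T x = 2 %[mod 9].
Proof.
have Hmul3 : 3 %| x -> reaches2 x by exact: reaches2_mul3.
have : x %% 9 < 9 by rewrite ltn_mod.
case Hx : (x %% 9) => [|[|[|[|[|[|[|[|[|r]]]]]]]]] _ //.
- by apply: Hmul3; lia.
- exact: reaches2_mod1.
- exact: reaches2_mod2.
- by apply: Hmul3; lia.
- exact: reaches2_mod4.
- exact: reaches2_mod5.
- by apply: Hmul3; lia.
- exact: reaches2_mod7.
- exact: reaches2_mod8.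
Qed.
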